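(* Let $n=m=2$ and let $\sigma$ be the preference profile in which each of the two alternatives is ranked first by exactly one of the two voters. If $\mathcal{D}$ is the Beta$(\frac14,1)$ distribution (density $\frac14x^{-3/4}$ on $(0,1)$), then for each alternative $j\in\{1,2\}$, $\mathbb{E}\!\left[\frac{\max_{k\in\{1,2\}}\mathrm{sw}(k,u)}{\mathrm{sw}(j,u)}\right]=\infty$; i.e., no deterministic rule has finite expected inverse distortion at $\sigma$.
   Context: Given $\mathcal{D}$ and a profile $\sigma$ (a ranking of the alternatives for each voter), a random utility profile $u$ consistent with $\sigma$ is generated as follows: independently for each voter $i$, draw $m$ i.i.d. samples from $\mathcal{D}$ and assign them, from highest to lowest, to the alternatives in the order of voter $i$'s ranking. The social welfare of $j$ is $\mathrm{sw}(j,u)=\sum_i u_{ij}$; expectation is over $u$. *)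

From HB Require Import structures.
From mathcomp Require Import all_boot all_order all_algebra.
From mathcomp Require Import all_classical all_reals all_analysis.
Set Implicit Arguments. Unset Strict Implicit. Unset Printing Implicit Defensive.
Import Order.TTheory GRing.Theory Num.Theory Num.Def.
Local Open Scope ring_scope.

Definition beta14_pdf (R : realType) (x : R) : R :=
  if (0 < x) && (x < 1) then 4^-1 * x `^ (- (3 / 4)) else 0.

(* A sample point: w = ((x1, x2), (y1, y2)); voter 0 draws x1,x2, voter 1
   draws y1,y2 (m = 2 i.i.d. samples from D per voter). *)
Definition sample4 (R : realType) := ((R * R) * (R * R))%type.

Definition joint_pdf (R : realType) (w : sample4 R) : R :=
  beta14_pdf w.1.1 * beta14_pdf w.1.2 * beta14_pdf w.2.1 * beta14_pdf w.2.2.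

Definition sigma_top (i : 'I_2) : 'I_2 := i.

(* utility profile consistent with sigma: the larger of voter i's two samples
   goes to its top alternative, the smaller to the other one. *)
Definition util (R : realType) (w : sample4 R) (i j : 'I_2) : R :=
  let s := if i == ord0 then w.1 else w.2 in
  if j == sigma_top i then maxr s.1 s.2 else minr s.1 s.2.

Definition sw (R : realType) (j : 'I_2) (w : sample4 R) : R :=
  \sum_(i < 2) util w i j.

Definition inv_dist_ratio (R : realType) (j : 'I_2) (w : sample4 R) : R :=
  (\big[maxr/0]_(k < 2) sw k w) / sw j w.

Definition leb4 (R : realType) :=
  (((@lebesgue_measure R) \x (@lebesgue_measure R)) \x
   ((@lebesgue_measure R) \x (@lebesgue_measure R)))%E.

Definition expect4 (R : realType) (f : sample4 R -> R) : \bar R :=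
  (\int[@leb4 R]_w (f w * joint_pdf w)%:E)%E.

From HB Require Import structures.
From mathcomp Require Import all_boot all_order all_algebra.
From mathcomp Require Import all_classical all_reals all_analysis.
From mathcomp Require Import ring lra.
Set Implicit Arguments. Unset Strict Implicit. Unset Printing Implicit Defensive.
Import Order.TTheory GRing.Theory Num.Theory Num.Def.
Local Open Scope ring_scope.
Local Open Scope classical_set_scope.

(* The Beta(1/4,1) density blows up like x^(-3/4) at 0.  Take the box where
   three samples lie in (0, t^4) and the fourth, a sample of the voter who
   ranks j last, lies in (1/2, 1): there sw(j) < 2 t^4 while the other
   alternative has welfare > 1/2, and the joint density is at least
   (4 t^3)^-3 / 4, so the integrand is at least 1/(1024 t^13).  The box has
   volume t^12 / 2, hence the expectation is at least 1/(2048 t) for every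
   t in (0, 1]. *)

Lemma lebesgue_measure2_sigma_finite (R : realType) :
  sigma_finite setT ((@lebesgue_measure R) \x (@lebesgue_measure R))%E.
Proof.
pose I k : set R := `](- k%:R), k%:R].
have I_nd n m : (n <= m)%N -> I n `<=` I m.
  by move=> nm; apply: subset_itv; rewrite bnd_simp ?lerN2 ler_nat.
have I_fin k : (@lebesgue_measure R (I k) < +oo)%E.
  by rewrite lebesgue_measure_itv /= lte_fin; case: ifP => _; rewrite ltry.
exists (fun k => I k `*` I k).
  apply/seteqP; split=> // -[x y] _.
  have : [set: R] x by [].
  rewrite -(bigcup_itvT false false) => -[n _ xn].
  have : [set: R] y by [].
  rewrite -(bigcup_itvT false false) => -[m _ ym].
  exists (maxn n m) => //; split.
  - exact: (I_nd n _ (leq_maxl n m) x xn).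
  - exact: (I_nd m _ (leq_maxr n m) y ym).
move=> k; split; first by apply: measurableX; exact: measurable_itv.
rewrite product_measure1E; try exact: measurable_itv.
by rewrite lte_mul_pinfty ?ge0_fin_numE ?I_fin.
Qed.

(* [lebesgue_measure \x lebesgue_measure] has no canonical sigma-finite
   instance, which [product_measure1E] needs for the outer product of [leb4];
   the alias carries one. *)
Definition lebesgue2 (R : realType) := ((@lebesgue_measure R) \x (@lebesgue_measure R))%E.
HB.instance Definition _ (R : realType) := Measure.on (@lebesgue2 R).
HB.instance Definition _ (R : realType) := Measure_isSigmaFinite.Build _ _ _
  (@lebesgue2 R) (@lebesgue_measure2_sigma_finite R).

Section integral_lower_bound.
Context d (T : measurableType d) (R : realType).
Variable mu : {measure set T -> \bar R}.

Lemma ge0_integral_ge_measure (g : T -> R) (B : set T) (k : R) :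
  (forall w, 0 <= g w) -> measurable B -> 0 <= k -> (forall w, B w -> k <= g w) ->
  (k%:E * mu B <= \int[mu]_w (g w)%:E)%E.
Proof.
move=> g0 mB k0 kg; rewrite ge0_integralTE => [|w]; last by rewrite lee_fin.
apply: ereal_sup_ubound => /=.
exists (scale_nnsfun (indic_nnsfun R mB) k0).
  move=> w /=; rewrite lee_fin /= measurable_realfun.mindicE.
  by case: (boolP (w \in B)) => [/set_mem/kg|_]; rewrite ?mulr1 ?mulr0.
by rewrite sintegralrM sintegral_indic.
Qed.

End integral_lower_bound.

Section inverse_distortion.
Variable R : realType.

Notation sample := ((measurableTypeR R * measurableTypeR R) *
                    (measurableTypeR R * measurableTypeR R))%type.

Lemma lebesgue4_box (A1 A2 A3 A4 : interval R) :
  (@lebesgue2 R \x @lebesgue2 R)%E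
    ((([set` A1] `*` [set` A2]) `*` ([set` A3] `*` [set` A4])) : set sample) =
  (lebesgue_measure [set` A1] * lebesgue_measure [set` A2] *
   (lebesgue_measure [set` A3] * lebesgue_measure [set` A4]))%E.
Proof.
have mI (A : interval R) : measurable ([set` A] : set (measurableTypeR R)).
  exact: measurable_itv.
apply: etrans (product_measure1E (@lebesgue2 R) (@lebesgue2 R)
  (measurableX (mI A1) (mI A2)) (measurableX (mI A3) (mI A4))) _.
by congr (_ * _)%E; exact: product_measure1E.
Qed.

Lemma beta14_pdf_ge0 (x : R) : 0 <= beta14_pdf x.
Proof. by rewrite /beta14_pdf; case: ifP => // _; rewrite mulr_ge0 ?powR_ge0. Qed.

Lemma beta14_pdf_gt0 (x : R) : beta14_pdf x != 0 -> 0 < x.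
Proof. by rewrite /beta14_pdf; case: (0 < x) => //; rewrite eqxx. Qed.

Lemma beta14_pdf_ge_quarter (x : R) : 0 < x < 1 -> 4^-1 <= beta14_pdf x.
Proof.
move=> /andP[x0 x1]; rewrite /beta14_pdf x0 x1 /= powRN.
rewrite -[leLHS]mulr1 ler_pM2l ?invr_gt0 // invf_ge1 ?powR_gt0 //.
apply: (@le_trans _ _ (1 `^ (3 / 4))); last by rewrite powR1.
by apply: ge0_ler_powR; rewrite ?nnegrE ?divr_ge0 ?ltW.
Qed.

Lemma beta14_pdf_ge_small (t x : R) : 0 < t <= 1 -> 0 < x < t ^+ 4 ->
  (4 * t ^+ 3)^-1 <= beta14_pdf x.
Proof.
move=> /andP[t0 t1] /andP[x0 xt].
have x1 : x < 1 := lt_le_trans xt (exprn_ile1 4 (ltW t0) t1).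
rewrite /beta14_pdf x0 x1 /= powRN invfM ler_pM2l ?invr_gt0 //.
rewrite lef_pV2 ?posrE ?exprn_gt0 ?powR_gt0 //.
have -> : t ^+ 3 = (t ^+ 4) `^ (3 / 4).
  rewrite -(powR_mulrn 4 (ltW t0)) -powRrM -(powR_mulrn 3 (ltW t0)).
  by congr (_ `^ _); field.
by apply: ge0_ler_powR; rewrite ?nnegrE ?divr_ge0 ?exprn_ge0 ?ltW.
Qed.

Lemma sw0E (w : sample4 R) : sw ord0 w = maxr w.1.1 w.1.2 + minr w.2.1 w.2.2.
Proof. by rewrite /sw !big_ord_recl big_ord0 /util /= addr0. Qed.

Lemma sw1E (w : sample4 R) : sw ord_max w = minr w.1.1 w.1.2 + maxr w.2.1 w.2.2.
Proof. by rewrite /sw !big_ord_recl big_ord0 /util /= addr0. Qed.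

Lemma max_swE (w : sample4 R) :
  \big[maxr/0]_(k < 2) sw k w = maxr (sw ord0 w) (maxr (sw ord_max w) 0).
Proof. by rewrite !big_ord_recl big_ord0. Qed.

Definition swap_voters (w : sample4 R) : sample4 R := (w.2, w.1).

Lemma joint_pdf_swap_voters (w : sample4 R) : joint_pdf (swap_voters w) = joint_pdf w.
Proof. by rewrite /joint_pdf /=; ring. Qed.

Lemma inv_dist_ratio_swap_voters (w : sample4 R) :
  inv_dist_ratio ord_max (swap_voters w) = inv_dist_ratio ord0 w.
Proof.
rewrite /inv_dist_ratio !max_swE !sw0E !sw1E /= maxCA.
by rewrite [minr w.2.1 _ + _]addrC [minr w.1.1 _ + _]addrC.
Qed.

Lemma inv_dist_ratio_ge0 (j : 'I_2) (w : sample4 R) :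
  0 <= w.1.1 -> 0 <= w.1.2 -> 0 <= w.2.1 -> 0 <= w.2.2 -> 0 <= inv_dist_ratio j w.
Proof.
move=> x1 x2 y1 y2; have sw_ge0 k : 0 <= sw k w.
  by apply: sumr_ge0 => i _; rewrite /util; case: ifP => _; case: ifP => _;
    rewrite ?le_max ?le_min ?x1 ?x2 ?y1 ?y2.
apply: divr_ge0 => //.
by elim/big_ind: _ => // a b a0 b0; rewrite le_max a0.
Qed.

Lemma integrand_ge0 (j : 'I_2) (w : sample4 R) :
  0 <= inv_dist_ratio j w * joint_pdf w.
Proof.
have [->|] := eqVneq (joint_pdf w) 0; first by rewrite mulr0.
rewrite /joint_pdf !mulf_eq0 !negb_or -!andbA.
case/and4P=> /beta14_pdf_gt0 x1 /beta14_pdf_gt0 x2 /beta14_pdf_gt0 y1 /beta14_pdf_gt0 y2.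
apply: mulr_ge0; first exact: inv_dist_ratio_ge0 (ltW x1) (ltW x2) (ltW y1) (ltW y2).
by rewrite !mulr_ge0 ?beta14_pdf_ge0.
Qed.

Lemma ord2_cases (j : 'I_2) : j = ord0 \/ j = ord_max.
Proof. by case: j => -[|[|//]] ?; [left|right]; apply: val_inj. Qed.

Definition ratio_box (j : 'I_2) (t : R) : set sample :=
  let s := (`]0, t ^+ 4[) in let u := (`]2^-1, 1[) in
  if j == ord0 then (s `*` s) `*` (u `*` s) else (u `*` s) `*` (s `*` s).

Lemma measurable_ratio_box (j : 'I_2) (t : R) : measurable (ratio_box j t).
Proof.
have mI (A : interval R) : measurable ([set` A] : set (measurableTypeR R)).
  exact: measurable_itv.
by rewrite /ratio_box; case: ifP => _; apply: measurableX; apply: measurableX.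
Qed.

Lemma lebesgue4_ratio_box (j : 'I_2) (t : R) : 0 < t ->
  (@lebesgue2 R \x @lebesgue2 R)%E (ratio_box j t) = ((t ^+ 4) ^+ 3 / 2)%:E.
Proof.
move=> t0; have t4 : 0 < t ^+ 4 by rewrite exprn_gt0.
have h1 : (2^-1 : R) < 1 by rewrite invf_lt1 // ltr1n.
rewrite /ratio_box; case: ifP => _; rewrite lebesgue4_box !lebesgue_measure_itv /=.
all: by rewrite !lte_fin t4 h1 /= -!EFinB -!EFinM; apply: congr1; field.
Qed.

Lemma inv_dist_ratio0_ge (e x1 x2 y1 y2 : R) :
  0 < x1 < e -> 0 < x2 < e -> 2^-1 < y1 -> 0 < y2 < e ->
  2^-1 / (2 * e) <= inv_dist_ratio ord0 ((x1, x2), (y1, y2)).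
Proof.
move=> /andP[x1_0 x1_e] /andP[x2_0 x2_e] y1_h /andP[y2_0 y2_e].
have y1_0 : 0 < y1 by apply: lt_trans y1_h; rewrite invr_gt0.
rewrite /inv_dist_ratio max_swE sw0E sw1E /=.
set a := maxr x1 x2 + minr y1 y2.
have a_gt0 : 0 < a by apply: ltr_pwDl; rewrite ?lt_max ?x1_0 // le_min !ltW.
have a_lt : a < 2 * e.
  have : maxr x1 x2 < e by rewrite gt_max x1_e x2_e.
  have : minr y1 y2 < e by rewrite gt_min y2_e orbT.
  rewrite /a; lra.
apply: ler_pM.
- by rewrite invr_ge0.
- by rewrite invr_ge0 mulr_ge0 // ltW // (lt_trans x1_0 x1_e).
- rewrite !le_max; apply/orP; right; apply/orP; left.
  have : y1 <= maxr y1 y2 by rewrite le_max lexx.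
  have : 0 <= minr x1 x2 by rewrite le_min !ltW.
  lra.
- by rewrite lef_pV2 ?posrE ?(lt_trans a_gt0 a_lt) // ltW.
Qed.

Lemma joint_pdf_ge_three_small (t x1 x2 y1 y2 : R) : 0 < t <= 1 ->
  0 < x1 < t ^+ 4 -> 0 < x2 < t ^+ 4 -> 0 < y1 < 1 -> 0 < y2 < t ^+ 4 ->
  (4 * t ^+ 3)^-1 * (4 * t ^+ 3)^-1 * 4^-1 * (4 * t ^+ 3)^-1 <=
  joint_pdf ((x1, x2), (y1, y2)).
Proof.
move=> t01 x1_s x2_s y1_u y2_s; have /andP[t0 _] := t01.
have c0 : 0 <= (4 * t ^+ 3)^-1 by rewrite invr_ge0 mulr_ge0 ?exprn_ge0 ?ltW.
rewrite /joint_pdf /=.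
apply: ler_pM; [by rewrite !mulr_ge0 | exact: c0 | | exact: beta14_pdf_ge_small].
apply: ler_pM; [by rewrite mulr_ge0 | by rewrite invr_ge0 | | exact: beta14_pdf_ge_quarter].
by apply: ler_pM => //; exact: beta14_pdf_ge_small.
Qed.

Lemma integrand_ge_ratio_box0 (t : R) (w : sample4 R) : 0 < t <= 1 ->
  ratio_box ord0 t w -> (1024 * t ^+ 13)^-1 <= inv_dist_ratio ord0 w * joint_pdf w.
Proof.
case: w => [[x1 x2] [y1 y2]] t01; have /andP[t0 _] := t01.
rewrite /ratio_box /= => -[[]]; rewrite !in_itv /= => x1_s x2_s [/andP[y1_h y1_1] y2_s].
have y1_0 : 0 < y1 by apply: lt_trans y1_h; rewrite invr_gt0.
have c0 : 0 <= (4 * t ^+ 3)^-1 by rewrite invr_ge0 mulr_ge0 ?exprn_ge0 ?ltW.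
apply: le_trans (ler_pM _ _ (inv_dist_ratio0_ge x1_s x2_s y1_h y2_s)
  (joint_pdf_ge_three_small t01 x1_s x2_s _ y2_s)).
- by rewrite le_eqVlt; apply/orP; left; apply/eqP; field; rewrite gt_eqF.
- by rewrite divr_ge0 ?invr_ge0 ?mulr_ge0 ?exprn_ge0 ?(ltW t0).
- by rewrite !mulr_ge0 ?c0 ?invr_ge0.
- by rewrite y1_0 y1_1.
Qed.

Lemma integrand_ge_ratio_box (j : 'I_2) (t : R) : 0 < t <= 1 -> forall w : sample4 R,
  ratio_box j t w -> (1024 * t ^+ 13)^-1 <= inv_dist_ratio j w * joint_pdf w.
Proof.
move=> t01 w; case: (ord2_cases j) => ->; first exact: integrand_ge_ratio_box0.
case: w => [[x1 x2] [y1 y2]] box1.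
rewrite -[(x1, x2, (y1, y2))]/(swap_voters ((y1, y2), (x1, x2))).
rewrite inv_dist_ratio_swap_voters joint_pdf_swap_voters.
apply: integrand_ge_ratio_box0 => //.
by move: box1; rewrite /ratio_box /= => -[[? ?] [? ?]].
Qed.

End inverse_distortion.

Theorem lemma2 (R : realType) (j : 'I_2) :
  expect4 (@inv_dist_ratio R j) = +oo%E.
Proof.
apply: eq_infty => M.
pose t : R := (2048 * (`|M| + 1))^-1.
have M_ge0 := normr_ge0 M.
have t0 : 0 < t by rewrite invr_gt0; lra.
have t01 : 0 < t <= 1 by rewrite t0 invf_le1; lra.
have k_ge0 : 0 <= (1024 * t ^+ 13)^-1.
  by rewrite invr_ge0; apply: mulr_ge0; [lra | exact: exprn_ge0 (ltW t0)].
apply: le_trans (ge0_integral_ge_measure (@lebesgue2 R \x @lebesgue2 R)%E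
  (integrand_ge0 j) (measurable_ratio_box j t) k_ge0 (integrand_ge_ratio_box (j:=j) t01)).
rewrite [X in (_ <= _ * X)%E](lebesgue4_ratio_box j t0) -EFinM lee_fin.
have -> : (1024 * t ^+ 13)^-1 * ((t ^+ 4) ^+ 3 / 2) = `|M| + 1.
  by rewrite /t; field; lra.
by have := ler_norm M; lra.
Qed.
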